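(* Let $F$ be a smooth regular distribution with PDF $f$ and $\ell$ an integer. For any two points $x<x'$ with $2^{-\ell}\le1-F(x')<1-F(x)\le2^{-\ell+1}$ it holds that $f(x')>2^{-33}f(x)$.
   Context: A distribution is smooth if it has no point masses and its PDF $f$ is $C^1$. A smooth distribution is regular iff $f'(v)(1-F(v))\ge-2f(v)^2$ for all $v$. *)

From Stdlib Require Import Reals.
From Coquelicot Require Import Coquelicot.
Open Scope R_scope.

(* F is the CDF of a distribution on R with probability density function f:
   f >= 0, F x = \int_{-oo}^x f, and \int_{-oo}^{+oo} f = 1.
   Having a density, such a distribution has no point masses (F is continuous). *)
Definition is_pdf_of (F f : R -> R) : Prop :=
  (forall x, 0 <= f x) /\
  (forall x, is_RInt_gen f (Rbar_locally m_infty) (at_point x) (F x)) /\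
  is_RInt_gen f (Rbar_locally m_infty) (Rbar_locally p_infty) 1.

Definition C1 (f : R -> R) : Prop :=
  forall x, ex_derive f x /\ continuous (Derive f) x.

Definition smooth_dist (F f : R -> R) : Prop :=
  is_pdf_of F f /\ C1 f.

Definition regular_dist (F f : R -> R) : Prop :=
  smooth_dist F f /\
  forall v, Derive f v * (1 - F v) >= - 2 * (f v) ^ 2.

From Stdlib Require Import Reals ZArith Lra Psatz.
From Coquelicot Require Import Coquelicot.
Open Scope R_scope.

(* Write S = 1 - F for the survival function; S' = -f.  The
   regularity condition f' S >= -2 f^2 says exactly that the quantity
   h = f / S^2 has derivative (f' S + 2 f^2) / S^3 >= 0 wherever S > 0, so h
   is nondecreasing there.  For x < x' with S(x') > 0 this gives
   f(x') >= f(x) (S(x') / S(x))^2 >= f(x) / 4, because the hypotheses place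
   S(x) and S(x') in the same dyadic interval [2^-l, 2^-l+1].  Moreover f(x')
   cannot vanish: otherwise h = 0, hence f = 0, on [x, x'], so F(x) = F(x'),
   contradicting S(x') < S(x).  From 0 < f(x') and f(x) <= 4 f(x') the bound
   f(x') > 2^-33 f(x) follows at once. *)

Section Density.

Variables F f : R -> R.
Hypothesis Hpdf : is_pdf_of F f.
Hypothesis f_cont : forall x, continuous f x.

Lemma F_increment (a b : R) : is_RInt f a b (F b - F a).
Proof.
  destruct Hpdf as [_ [HF _]].
  assert (Hab : is_RInt f a b (RInt f a b)).
  { apply (RInt_correct (V:=R_CompleteNormedModule)),
      (ex_RInt_continuous (V:=R_CompleteNormedModule)); intros; apply f_cont. }
  assert (Hb : is_RInt_gen f (Rbar_locally m_infty) (at_point b) (plus (F a) (RInt f a b))).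
  { apply (is_RInt_gen_Chasles (V:=R_NormedModule)) with (b := a);
      [apply HF | apply is_RInt_gen_at_point, Hab]. }
  assert (EFb : F b = F a + RInt f a b).
  { rewrite <- (is_RInt_gen_unique (V:=R_CompleteNormedModule) _ _ (HF b)).
    exact (is_RInt_gen_unique (V:=R_CompleteNormedModule) _ _ Hb). }
  replace (F b - F a) with (RInt f a b) by lra. exact Hab.
Qed.

Lemma F_nondecreasing (a b : R) : a <= b -> F a <= F b.
Proof.
  intro Hab.
  pose proof (is_RInt_ge_0 f a b _ Hab (F_increment a b)
              (fun t _ => proj1 Hpdf t)) as Hnonneg.
  lra.
Qed.

Lemma survival_derive (v : R) : is_derive (fun t => 1 - F t) v (- f v).
Proof.
  assert (HF : is_derive (fun t => F t - F 0) v (f v)).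
  { apply is_derive_RInt with (a := 0); [|apply f_cont].
    apply filter_forall; intro; apply F_increment. }
  pose proof (is_derive_minus (fun _ => 1 - F 0) (fun t => F t - F 0) v zero (f v)
               (is_derive_const _ _) HF) as HS.
  replace (- f v) with (minus zero (f v))
    by (unfold minus, plus, opp, zero; simpl; ring).
  eapply is_derive_ext; [|exact HS].
  intro t; unfold minus, plus, opp; simpl; ring.
Qed.

End Density.

Section Regular.

Variables F f : R -> R.
Hypothesis Hreg : regular_dist F f.

(* The ratio f / (1 - F)^2 whose monotonicity is equivalent to regularity. *)
Definition hazard_ratio (t : R) : R := f t / ((1 - F t) * (1 - F t)).

Lemma density_continuous (t : R) : continuous f t.
Proof. exact (ex_derive_continuous f t (proj1 (proj2 (proj1 Hreg) t))). Qed.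

Lemma hazard_ratio_derive (t : R) : 0 < 1 - F t ->
  is_derive hazard_ratio t
    ((Derive f t * (1 - F t) + 2 * f t ^ 2) / (1 - F t) ^ 3).
Proof.
  intro Ht.
  destruct Hreg as [[Hpdf HC1] _].
  pose proof (survival_derive F f Hpdf density_continuous t) as HS.
  pose proof (is_derive_div f (fun s => (1 - F s) * (1 - F s)) t _ _
    (Derive_correct f t (proj1 (HC1 t)))
    (is_derive_mult (K:=R_AbsRing) _ _ t _ _ HS HS Rmult_comm)
    ltac:(apply Rgt_not_eq, Rmult_lt_0_compat; lra)) as Hq.
  replace ((Derive f t * (1 - F t) + 2 * f t ^ 2) / (1 - F t) ^ 3) with
    ((Derive f t * ((1 - F t) * (1 - F t))
      - f t * (- f t * (1 - F t) + (1 - F t) * - f t))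
     / ((1 - F t) * (1 - F t)) ^ 2) by (field; lra).
  exact Hq.
Qed.

(* Regularity makes that derivative nonnegative, so h is nondecreasing on
   any interval where the survival function is positive (mean value theorem). *)
Lemma hazard_ratio_mono (y z : R) : y <= z ->
  (forall t, y <= t <= z -> 0 < 1 - F t) -> hazard_ratio y <= hazard_ratio z.
Proof.
  intros Hyz Hpos.
  set (dh := fun t => (Derive f t * (1 - F t) + 2 * f t ^ 2) / (1 - F t) ^ 3).
  assert (Hder : forall t, y <= t <= z -> is_derive hazard_ratio t (dh t)).
  { intros t Ht; apply hazard_ratio_derive, Hpos, Ht. }
  destruct (MVT_gen hazard_ratio y z dh) as [c [Hc Hmvt]].
  - intros t Ht; rewrite Rmin_left, Rmax_right in Ht by lra.
    apply Hder; lra.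
  - intros t Ht; rewrite Rmin_left, Rmax_right in Ht by lra.
    apply continuity_pt_filterlim,
      (ex_derive_continuous (K:=R_AbsRing) (V:=R_NormedModule)).
    exists (dh t); apply Hder, Ht.
  - rewrite Rmin_left, Rmax_right in Hc by lra.
    assert (Sc : 0 < 1 - F c) by (apply Hpos; lra).
    assert (Hdh : 0 <= dh c).
    { apply Rmult_le_pos; [pose proof (proj2 Hreg c); lra|].
      apply Rlt_le, Rinv_0_lt_compat, pow_lt, Sc. }
    nra.
Qed.

Lemma density_ratio_bound (x x' : R) : x <= x' -> 0 < 1 - F x' ->
  f x * ((1 - F x') * (1 - F x')) <= f x' * ((1 - F x) * (1 - F x)).
Proof.
  intros Hxx' Sx'.
  assert (Spos : forall t, t <= x' -> 0 < 1 - F t).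
  { intros t Ht; pose proof (F_nondecreasing F f (proj1 (proj1 Hreg))
      density_continuous t x' Ht); lra. }
  pose proof (hazard_ratio_mono x x' Hxx' (fun t Ht => Spos t (proj2 Ht))) as Hh.
  pose proof (Spos x Hxx') as Sx.
  unfold hazard_ratio in Hh.
  apply Rmult_le_compat_r with (r := (1 - F x) * (1 - F x) * ((1 - F x') * (1 - F x')))
    in Hh; [|apply Rlt_le; repeat apply Rmult_lt_0_compat; lra].
  replace (f x / ((1 - F x) * (1 - F x)) * ((1 - F x) * (1 - F x) * ((1 - F x') * (1 - F x'))))
    with (f x * ((1 - F x') * (1 - F x'))) in Hh by (field; lra).
  replace (f x' / ((1 - F x') * (1 - F x')) * ((1 - F x) * (1 - F x) * ((1 - F x') * (1 - F x'))))
    with (f x' * ((1 - F x) * (1 - F x))) in Hh by (field; lra).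
  exact Hh.
Qed.

(* If F strictly increases between x and x' (and S(x') > 0), then f(x') > 0:
   otherwise h, hence f, would vanish on all of [x, x']. *)
Lemma density_positive (x x' : R) : x <= x' -> 0 < 1 - F x' -> F x < F x' ->
  0 < f x'.
Proof.
  intros Hxx' Sx' HFlt.
  pose proof (proj1 (proj1 Hreg)) as Hpdf.
  destruct (Rle_lt_or_eq_dec 0 (f x') (proj1 Hpdf x')) as [|Hz]; [assumption|].
  exfalso.
  assert (Hzero : forall t, x <= t <= x' -> f t = 0).
  { intros t Ht.
    pose proof (density_ratio_bound t x' (proj2 Ht) Sx') as Hb.
    rewrite <- Hz, Rmult_0_l in Hb.
    pose proof (proj1 Hpdf t).
    pose proof (Rmult_lt_0_compat _ _ Sx' Sx'); nra. }
  pose proof (F_increment F f Hpdf density_continuous x x') as HI.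
  apply (is_RInt_ext f (fun _ => 0)) in HI.
  2: { intros t Ht; rewrite Rmin_left, Rmax_right in Ht by lra; apply Hzero; lra. }
  pose proof (is_RInt_unique (V:=R_CompleteNormedModule) _ _ _ _
               (is_RInt_const (V:=R_CompleteNormedModule) x x' 0)) as H0.
  rewrite (is_RInt_unique (V:=R_CompleteNormedModule) _ _ _ _ HI) in H0.
  change (scal (x' - x) 0) with ((x' - x) * 0) in H0.
  lra.
Qed.

End Regular.

Theorem corollary2 (F f : R -> R) (l : Z) (x x' : R) :
  regular_dist F f ->
  x < x' ->
  powerRZ 2 (- l) <= 1 - F x' ->
  1 - F x' < 1 - F x ->
  1 - F x <= powerRZ 2 (- l + 1) ->
  f x' > powerRZ 2 (-33) * f x.
Proof.
  intros Hreg Hxx' Hlow Hlt Hup.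
  assert (Hp : 0 < powerRZ 2 (- l)) by (apply powerRZ_lt; lra).
  assert (Hdouble : powerRZ 2 (- l + 1) = 2 * powerRZ 2 (- l))
    by (rewrite powerRZ_add by lra; simpl; ring).
  assert (H33 : powerRZ 2 (-33) < / 4).
  { simpl; replace (2 ^ Pos.to_nat 33) with 8589934592 by (simpl; ring).
    apply Rinv_lt_contravar; lra. }
  assert (H33pos : 0 < powerRZ 2 (-33)) by (apply powerRZ_lt; lra).
  (* S(x) <= 2 S(x'), so f(x) <= 4 f(x'). *)
  pose proof (density_ratio_bound F f Hreg x x' (Rlt_le _ _ Hxx') ltac:(lra)) as Hbound.
  pose proof (proj1 (proj1 (proj1 Hreg)) x) as Hfx.
  pose proof (density_positive F f Hreg x x' (Rlt_le _ _ Hxx') ltac:(lra) ltac:(lra)) as Hpos.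
  assert (Hsq : (1 - F x) * (1 - F x) <= 4 * ((1 - F x') * (1 - F x'))) by nra.
  assert (H4 : f x <= 4 * f x').
  { apply Rmult_le_reg_r with ((1 - F x') * (1 - F x')); [nra|].
    pose proof (Rmult_le_compat_l (f x') _ _ (Rlt_le _ _ Hpos) Hsq); lra. }
  nra.
Qed.
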